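(* There is a vector $\Delta\in\mathbb R^d$ such that $$w-w^\star=H(\phi-\phi^\star)+\nabla g(\phi^\star)^\top(\lambda-\lambda^\star)+\Delta,$$ with $\|\Delta\|_{H^{-1}}\le\frac14\|\phi-\phi^\star\|_H+L\,\|\phi-\phi^\star\|_H\,\|\lambda-\lambda^\star\|_W$, and moreover $$\|P_GH^{1/2}(\phi-\phi^\star)\|_2\le\frac L2\|\phi-\phi^\star\|_H^2.$$
   Context: Let $m\le d$ and $g=(g_1,\dots,g_m):\mathbb R^d\to\mathbb R^m$, each $g_i$ strongly convex and twice differentiable; $\Phi=\{x:g(x)\le0\}$; $\nabla g(x)\in\mathbb R^{m\times d}$ is the Jacobian. For $w^\star,w\in\mathbb R^d$ let $\phi^\star=\arg\max_{x\in\Phi}x^\top w^\star$, $\phi=\arg\max_{x\in\Phi}x^\top w$, with $g(\phi^\star)=g(\phi)=0$. $\lambda^\star,\lambda\in\mathbb R^m_{\ge0}$ are KKT multipliers: $w^\star=\nabla g(\phi^\star)^\top\lambda^\star$, $w=\nabla g(\phi)^\top\lambda$. $H=\sum_i\lambda^\star_i\nabla^2g_i(\phi^\star)$, positive definite; $\|x\|_M=\sqrt{x^\top Mx}$. $W=\nabla g(\phi^\star)H^{-1}\nabla g(\phi^\star)^\top$, invertible. $P_G=H^{-1/2}\nabla g(\phi^\star)^\top W^{-1}\nabla g(\phi^\star)H^{-1/2}$. Smoothness: (S1) $\|\{\nabla g(\phi)-\nabla g(\phi^\star)\}^\top\lambda^\star-H(\phi-\phi^\star)\|_{H^{-1}}\le\frac14\|\phi-\phi^\star\|_H$;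 (S2) there is $L>0$ with $\|W^{-1/2}\{\nabla g(x)-\nabla g(\phi^\star)\}H^{-1/2}\|_2\le L\|x-\phi^\star\|_H$ for all $x\in\mathbb R^d$. *)

From HB Require Import structures.
From mathcomp Require Import all_boot all_order all_algebra.
From mathcomp Require Import all_classical all_reals all_analysis.
Set Implicit Arguments. Unset Strict Implicit. Unset Printing Implicit Defensive.
Import Order.TTheory GRing.Theory Num.Theory.
Import numFieldNormedType.Exports.
Local Open Scope ring_scope.
Local Open Scope classical_set_scope.

Section Defs.
Variable R : realType.

(* The library's [jacobian] works on row vectors and is the
   d x m transpose; we transport along transposition. *)
Definition Jac (d m : nat) (g : 'cV[R]_d -> 'cV[R]_m) (x : 'cV[R]_d) : 'M[R]_(m, d) :=
  (jacobian (fun r : 'rV[R]_d => (g r^T)^T) x^T)^T.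

Definition grad (d : nat) (f : 'cV[R]_d -> R) (x : 'cV[R]_d) : 'cV[R]_d :=
  (Jac (fun y => (const_mx (f y) : 'cV[R]_1)) x)^T.

(* Hessian matrix: entry (j,k) = d/dx_k d/dx_j f *)
Definition hess (d : nat) (f : 'cV[R]_d -> R) (x : 'cV[R]_d) : 'M[R]_d :=
  Jac (grad f) x.

Definition gcomp (d m : nat) (g : 'cV[R]_d -> 'cV[R]_m) (i : 'I_m) : 'cV[R]_d -> R :=
  fun x => g x i 0.

Definition enorm (n : nat) (v : 'cV[R]_n) : R := Num.sqrt (\sum_i v i 0 ^+ 2).

Definition mnorm (n : nat) (M : 'M[R]_n) (v : 'cV[R]_n) : R :=
  Num.sqrt ((v^T *m M *m v) 0 0).

Definition opnorm2 (p q : nat) (A : 'M[R]_(p, q)) : R :=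
  sup [set enorm (A *m v) | v in [set v : 'cV[R]_q | enorm v <= 1]].

Definition symmx (n : nat) (A : 'M[R]_n) : Prop := A^T = A.

Definition posdef (n : nat) (A : 'M[R]_n) : Prop :=
  forall v : 'cV[R]_n, v != 0 -> 0 < (v^T *m A *m v) 0 0.

Definition strongly_convex (d : nat) (f : 'cV[R]_d -> R) : Prop :=
  exists2 mu : R, 0 < mu &
    forall (x y : 'cV[R]_d) (t : R), 0 <= t <= 1 ->
      f (t *: x + (1 - t) *: y) <=
        t * f x + (1 - t) * f y - mu / 2 * t * (1 - t) * enorm (x - y) ^+ 2.

Definition twice_differentiable (d : nat) (f : 'cV[R]_d -> R) : Prop :=
  (forall x, differentiable f x) /\ (forall x, differentiable (grad f) x).

Definition is_argmax (d : nat) (Phi : set 'cV[R]_d) (w x : 'cV[R]_d) : Prop :=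
  Phi x /\ forall y, Phi y -> (y^T *m w) 0 0 <= (x^T *m w) 0 0.

End Defs.

(* Write J := Jac g phistar, J1 := Jac g phi and v := phi - phistar.  Both KKT identities give
   w - wstar - H v - J^T (lam - lamstar) = ((J1 - J)^T lamstar - H v) + (J1 - J)^T (lam - lamstar);
   (S1) bounds the first summand, and after whitening by H^{-1/2} and W^{-1/2} the second is
   controlled by the operator norm appearing in (S2).

   For the projection, B := H^{-1/2} J^T W^{-1/2} satisfies B^T B = 1, so
   |P_G H^{1/2} v| = |z| with z := W^{-1/2} J v.  Along the segment from phistar to phi the
   scalar function h t := c^T g(phistar + t v), c := W^{-1/2} z, vanishes at both ends since
   both points are active, h'(0) = |z|^2, and by (S2) h' decreases at rate at most
   L |z| |v|_H^2.  A function vanishing at 0 and 1 cannot have h'(0) larger than half that rate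
   (mean value theorem), whence |z| <= L/2 |v|_H^2. *)

From HB Require Import structures.
From mathcomp Require Import all_boot all_order all_algebra.
From mathcomp Require Import all_classical all_reals all_analysis.
From mathcomp Require Import ring lra.
Import Order.TTheory GRing.Theory Num.Theory.
Import numFieldNormedType.Exports.
Set Implicit Arguments. Unset Strict Implicit. Unset Printing Implicit Defensive.
Local Open Scope ring_scope.
Local Open Scope classical_set_scope.

Section Euclidean.
Variable R : realType.
Implicit Types n : nat.

Definition dot n (u v : 'cV[R]_n) : R := (u^T *m v) 0 0.

Lemma dotE n (u v : 'cV[R]_n) : dot u v = \sum_i u i 0 * v i 0.
Proof. by rewrite /dot mxE; apply: eq_bigr => i _; rewrite mxE. Qed.

Lemma dotC n (u v : 'cV[R]_n) : dot u v = dot v u.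
Proof. by rewrite !dotE; apply: eq_bigr => i _; rewrite mulrC. Qed.

Lemma dotDr n (u v w : 'cV[R]_n) : dot u (v + w) = dot u v + dot u w.
Proof. by rewrite /dot mulmxDr mxE. Qed.

Lemma dotNr n (u v : 'cV[R]_n) : dot u (- v) = - dot u v.
Proof. by rewrite /dot mulmxN mxE. Qed.

Lemma dotZr n a (u v : 'cV[R]_n) : dot u (a *: v) = a * dot u v.
Proof. by rewrite /dot -scalemxAr mxE. Qed.

Lemma dotDl n (u v w : 'cV[R]_n) : dot (u + v) w = dot u w + dot v w.
Proof. by rewrite dotC dotDr !(dotC w). Qed.

Lemma dotNl n (u v : 'cV[R]_n) : dot (- u) v = - dot u v.
Proof. by rewrite dotC dotNr dotC. Qed.

Lemma dotZl n a (u v : 'cV[R]_n) : dot (a *: u) v = a * dot u v.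
Proof. by rewrite dotC dotZr dotC. Qed.

Lemma dot_trmulmx p q (A : 'M[R]_(p, q)) (u : 'cV[R]_p) (v : 'cV[R]_q) :
  dot (A^T *m u) v = dot u (A *m v).
Proof. by rewrite /dot trmx_mul trmxK mulmxA. Qed.

Lemma dot_ge0 n (u : 'cV[R]_n) : 0 <= dot u u.
Proof. by rewrite dotE; apply: sumr_ge0 => i _; rewrite -expr2 sqr_ge0. Qed.

Lemma enormE n (v : 'cV[R]_n) : enorm v = Num.sqrt (dot v v).
Proof. by rewrite /enorm dotE; congr Num.sqrt; apply: eq_bigr => i _; rewrite expr2. Qed.

Lemma enorm_sqr n (v : 'cV[R]_n) : enorm v ^+ 2 = dot v v.
Proof. by rewrite enormE sqr_sqrtr ?dot_ge0. Qed.

Lemma enorm_ge0 n (v : 'cV[R]_n) : 0 <= enorm v.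
Proof. exact: sqrtr_ge0. Qed.

Lemma enorm0 n : enorm (0 : 'cV[R]_n) = 0.
Proof. by rewrite enormE /dot mulmx0 mxE sqrtr0. Qed.

Lemma enorm_eq0 n (v : 'cV[R]_n) : (enorm v == 0) = (v == 0).
Proof.
apply/eqP/eqP => [v0|->]; last exact: enorm0.
have : dot v v = 0 by rewrite -enorm_sqr v0 expr0n.
rewrite dotE => /psumr_eq0P vv0; apply/matrixP => i j; rewrite (ord1 j) mxE.
have /eqP := vv0 (fun i _ => sqr_ge0 (v i 0)) i isT.
by rewrite mulf_eq0 orbb => /eqP.
Qed.

Lemma enorm_gt0 n (v : 'cV[R]_n) : (0 < enorm v) = (v != 0).
Proof. by rewrite lt_def enorm_eq0 enorm_ge0 andbT. Qed.

Lemma enormZ n a (v : 'cV[R]_n) : enorm (a *: v) = `|a| * enorm v.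
Proof. by rewrite !enormE dotZl dotZr mulrA sqrtrM ?sqr_ge0 // sqrtr_sqr. Qed.

Lemma enormN n (v : 'cV[R]_n) : enorm (- v) = enorm v.
Proof. by rewrite !enormE dotNl dotNr opprK. Qed.

Lemma cauchy_schwarz n (u v : 'cV[R]_n) : dot u v <= enorm u * enorm v.
Proof.
have [->|u0] := eqVneq u 0; first by rewrite dotC /dot mulmx0 mxE enorm0 mul0r.
have [->|v0] := eqVneq v 0; first by rewrite /dot mulmx0 mxE enorm0 mulr0.
have ab_gt0 : 0 < enorm u * enorm v by rewrite mulr_gt0 ?enorm_gt0.
have := dot_ge0 (enorm v *: u - enorm u *: v).
rewrite !(dotDl, dotDr, dotNl, dotNr, dotZl, dotZr) -!enorm_sqr (dotC v u).
nra.
Qed.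

Lemma normr_dot_le n (u v : 'cV[R]_n) : `|dot u v| <= enorm u * enorm v.
Proof.
rewrite ler_norml cauchy_schwarz andbT lerNl -dotNl -(enormN u).
exact: cauchy_schwarz.
Qed.

Lemma ler_enormD n (u v : 'cV[R]_n) : enorm (u + v) <= enorm u + enorm v.
Proof.
rewrite -(ler_pXn2r (n := 2)) ?nnegrE ?addr_ge0 ?enorm_ge0 //.
rewrite enorm_sqr dotDl !dotDr -!enorm_sqr (dotC v u) sqrrD.
have := cauchy_schwarz u v; lra.
Qed.

Lemma enorm_isometry p q (B : 'M[R]_(p, q)) (v : 'cV[R]_q) :
  B^T *m B = 1%:M -> enorm (B *m v) = enorm v.
Proof. by move=> BB1; rewrite !enormE -dot_trmulmx mulmxA BB1 mul1mx. Qed.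

End Euclidean.

Section OperatorNorm.
Variables (R : realType) (p q : nat).
Implicit Types (A : 'M[R]_(p, q)).

Lemma opnorm2_ubound A :
  has_ubound [set enorm (A *m v) | v in [set v : 'cV[R]_q | enorm v <= 1]].
Proof.
exists (Num.sqrt (\sum_i enorm (row i A)^T ^+ 2)) => _ [v /= v1 <-].
rewrite /enorm; apply: ler_wsqrtr; apply: ler_sum => i _.
have -> : (A *m v) i 0 = dot (row i A)^T v.
  by rewrite dotE mxE; apply: eq_bigr => j _; rewrite !mxE.
rewrite -real_normK ?num_real // -/(enorm _).
apply: le_trans (_ : (enorm (row i A)^T * enorm v) ^+ 2 <= _).
  by rewrite lerXn2r ?nnegrE ?mulr_ge0 ?enorm_ge0 ?normr_dot_le.
by rewrite exprMn ler_piMr ?sqr_ge0 ?expr_le1 ?enorm_ge0.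
Qed.

Lemma opnorm2_ge0 A : 0 <= opnorm2 A.
Proof.
apply: le_trans (ub_le_sup (opnorm2_ubound A) _); first exact: enorm_ge0 (A *m 0).
by exists 0 => //=; rewrite enorm0.
Qed.

Lemma enorm_mulmx_le A v : enorm (A *m v) <= opnorm2 A * enorm v.
Proof.
have [->|v0] := eqVneq v 0; first by rewrite mulmx0 !enorm0 mulr0.
have v_gt0 : 0 < enorm v by rewrite enorm_gt0.
have : enorm (A *m ((enorm v)^-1 *: v)) <= opnorm2 A.
  apply: (ub_le_sup (opnorm2_ubound A)); exists ((enorm v)^-1 *: v) => //=.
  by rewrite enormZ ger0_norm ?invr_ge0 ?enorm_ge0 // mulVf ?gt_eqF.
by rewrite -scalemxAr enormZ ger0_norm ?invr_ge0 ?enorm_ge0 // ler_pdivrMl // mulrC.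
Qed.

Lemma enorm_trmulmx_le A u : enorm (A^T *m u) <= opnorm2 A * enorm u.
Proof.
set y := A^T *m u.
have [y0|y_gt0] := eqVneq (enorm y) 0; first by rewrite y0 mulr_ge0 ?opnorm2_ge0 ?enorm_ge0.
have : enorm y ^+ 2 <= enorm y * (opnorm2 A * enorm u).
  rewrite enorm_sqr {1}/y dot_trmulmx dotC mulrCA mulrA.
  apply: le_trans (cauchy_schwarz _ _) _.
  by rewrite ler_wpM2r ?enorm_ge0 ?enorm_mulmx_le.
by rewrite expr2 ler_pM2l // lt_def y_gt0 enorm_ge0.
Qed.

End OperatorNorm.

Section SquareRoot.
Variables (R : realType) (n : nat) (M S : 'M[R]_n).
Hypotheses (S_sym : S^T = S) (S_sqr : S *m S = M).

Lemma mnorm_sqrtmx v : mnorm M v = enorm (S *m v).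
Proof. by rewrite /mnorm enormE -dot_trmulmx dotC S_sym /dot (mulmxA S) S_sqr mulmxA. Qed.

Lemma mnormD_le u v : mnorm M (u + v) <= mnorm M u + mnorm M v.
Proof. by rewrite !mnorm_sqrtmx mulmxDr ler_enormD. Qed.

Lemma mnormZ a v : mnorm M (a *: v) = `|a| * mnorm M v.
Proof. by rewrite !mnorm_sqrtmx -scalemxAr enormZ. Qed.

Lemma trmx_invmx_sqrt : (invmx S)^T = invmx S.
Proof. by rewrite trmx_inv S_sym. Qed.

Hypothesis S_unit : S \in unitmx.

Lemma invmx_sqrtmx : invmx S *m invmx S = invmx M.
Proof.
have M_unit : M \in unitmx by rewrite -S_sqr unitmx_mul S_unit.
have SSi : M *m (invmx S *m invmx S) = 1%:M.
  by rewrite -S_sqr -mulmxA (mulmxA S (invmx S)) mulmxV // mul1mx mulmxV.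
by rewrite -[LHS](mulKmx M_unit) SSi mulmx1.
Qed.

End SquareRoot.

Lemma posdef_unitmx (R : realType) n (A : 'M[R]_n) : posdef A -> A \in unitmx.
Proof.
move=> A_pd; rewrite -row_free_unit -kermx_eq0; apply/negPn/negP.
case/rowV0Pn => u /sub_kermxP uA0 u0.
have : u^T != 0 by rewrite -(inj_eq (@trmx_inj _ _ _)) trmxK trmx0.
by move/A_pd; rewrite trmxK uA0 mul0mx mxE ltxx.
Qed.

Section Differentiability.
Variable R : realType.

Lemma differentiable_mx (V : normedModType R) p q (F : V -> 'M[R]_(p, q)) a :
  (forall i j, differentiable (fun x => F x i j) a) -> differentiable F a.
Proof.
move=> F_diff.
have -> : F = \sum_i \sum_j (fun x => F x i j *: delta_mx i j).
  apply: funext => x; rewrite {1}(matrix_sum_delta (F x)) fct_sumE.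
  by apply: eq_bigr => i _; rewrite fct_sumE.
by apply: differentiable_sum => i; apply: differentiable_sum => j; exact: differentiableZl.
Qed.

Lemma differentiable_trmx p q (a : 'M[R]_(p, q)) :
  differentiable (fun M : 'M[R]_(p, q) => M^T) a.
Proof.
apply: differentiable_mx => i j; under eq_fun do rewrite mxE.
exact: differentiable_coord.
Qed.

Lemma is_derive_line (V W : normedModType R) (f : V -> W) (p v : V) (t : R) :
  differentiable f (t *: v + p) ->
  is_derive t 1 (fun s : R => f (s *: v + p)) ('D_v f (t *: v + p)).
Proof.
move=> f_diff.
have quotE : (fun h : R => h^-1 *: ((fun s => f (s *: v + p)) (h *: 1 + t) - f (t *: v + p)))
           = (fun h : R => h^-1 *: (f (h *: v + (t *: v + p)) - f (t *: v + p))).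
  by apply: funext => h; rewrite [h *: 1]mulr1 scalerDl addrA.
apply: DeriveDef; first by rewrite /derivable quotE; exact: diff_derivable.
by rewrite /derive quotE.
Qed.

End Differentiability.

Section Jacobian.
Variables (R : realType) (d m : nat) (g : 'cV[R]_d -> 'cV[R]_m).
Hypothesis g_diff : forall i x, differentiable (gcomp g i) x.

Lemma Jac_mulmxE x v i : (Jac g x *m v) i 0 = 'D_v (gcomp g i) x.
Proof.
pose G := fun r : 'rV[R]_d => (g r^T)^T.
have G_diff r : differentiable G r.
  apply: differentiable_mx => i0 j.
  have -> : (fun r => G r i0 j) = gcomp g j \o (fun r => r^T).
    by apply: funext => r'; rewrite /G /= mxE (ord1 i0).
  exact: differentiable_comp (differentiable_trmx _) (g_diff _ _).
rewrite /Jac -[v]trmxK -trmx_mul mxE -/G -deriveEjacobian //.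
rewrite derive_mx ?mxE; last exact/diff_derivable/G_diff.
rewrite /derive; do 2 f_equal; apply: funext => h /=.
rewrite /G /gcomp !mxE trmxK; congr (_ *: (g _ i 0 - _)).
by apply/matrixP => a b; rewrite !mxE.
Qed.

Lemma is_derive_dot_line (c : 'cV[R]_m) (p v : 'cV[R]_d) (t : R) :
  is_derive t 1 (fun s => dot c (g (s *: v + p))) (dot c (Jac g (t *: v + p) *m v)).
Proof.
have -> : (fun s => dot c (g (s *: v + p))) = \sum_i (fun s => c i 0 * gcomp g i (s *: v + p)).
  by apply: funext => s; rewrite dotE fct_sumE.
rewrite dotE; apply: is_derive_sum => i; rewrite Jac_mulmxE.
apply: is_deriveZ; exact: is_derive_line.
Qed.

End Jacobian.

Lemma deriv0_le_of_roots01 (R : realType) (h dh : R -> R) (a : R) :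
  (forall t : R, is_derive t (1 : R) h (dh t)) -> h 0 = 0 -> h 1 = 0 ->
  (forall t, 0 < t < 1 -> dh 0 - a * t <= dh t) -> dh 0 <= a / 2.
Proof.
move=> h_der h0 h1 dh_ge.
pose k := h - dh 0 \*: (@id R) + (a / 2) \*: (@id R) ^+ 2.
(* [dk] is written in the shape produced by the [is_derive] instances for [k]. *)
pose dk t := dh t - dh 0 *: 1 + (a / 2) *: ((2%:R * t ^+ 1) *: 1).
have k_der (t : R) : is_derive t (1 : R) k (dk t) by apply: is_deriveD.
have k_cont : continuous k.
  move=> t; apply/differentiable_continuous/derivable1_diffP.
  exact: (@ex_derive _ _ _ _ _ _ _ (k_der t)).
have [x] := MVT ltr01 (fun x _ => k_der x) (continuous_subspaceT k_cont).
rewrite in_itv /= => x01; have := dh_ge x x01.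
have scaleE (u w : R) : u *: w = u * w by [].
rewrite /k /dk /= !fctE /GRing.scale_fun /= h0 h1 !scaleE.
lra.
Qed.

Section Whitening.
Variables (R : realType) (m d : nat).
Variables (H Hh : 'M[R]_d) (W Wh : 'M[R]_m).
Hypotheses (Hh_sym : Hh^T = Hh) (Hh_sqr : Hh *m Hh = H) (Hh_unit : Hh \in unitmx).
Hypotheses (Wh_sym : Wh^T = Wh) (Wh_sqr : Wh *m Wh = W) (Wh_unit : Wh \in unitmx).

Lemma mnorm_invmx_trmulmx_le (A : 'M[R]_(m, d)) (u : 'cV[R]_m) :
  mnorm (invmx H) (A^T *m u) <= opnorm2 (invmx Wh *m A *m invmx Hh) * mnorm W u.
Proof.
rewrite (mnorm_sqrtmx (trmx_invmx_sqrt Hh_sym) (invmx_sqrtmx Hh_sqr Hh_unit)).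
rewrite (mnorm_sqrtmx Wh_sym Wh_sqr).
have -> : invmx Hh *m (A^T *m u) = (invmx Wh *m A *m invmx Hh)^T *m (Wh *m u).
  by rewrite !trmx_mul !trmx_invmx_sqrt // -!mulmxA mulKmx.
exact: enorm_trmulmx_le.
Qed.

Lemma enorm_projection (J : 'M[R]_(m, d)) (v : 'cV[R]_d) :
  W = J *m invmx H *m J^T ->
  enorm (invmx Hh *m J^T *m invmx W *m J *m invmx Hh *m Hh *m v)
  = enorm (invmx Wh *m (J *m v)).
Proof.
move=> WE; set B := invmx Hh *m J^T *m invmx Wh.
have B_isometry : B^T *m B = 1%:M.
  rewrite /B !trmx_mul trmxK !trmx_invmx_sqrt // !mulmxA.
  rewrite -(mulmxA (invmx Wh *m J)) (invmx_sqrtmx Hh_sqr) // -(mulmxA (invmx Wh) J).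
  rewrite -(mulmxA (invmx Wh)) -WE -Wh_sqr.
  by rewrite mulmxA mulVmx // mul1mx mulmxV.
rewrite -(enorm_isometry _ B_isometry) /B -(invmx_sqrtmx Wh_sqr) //.
by rewrite !mulmxA mulmxKV.
Qed.

End Whitening.

Section Curvature.
Variables (R : realType) (m d : nat) (g : 'cV[R]_d -> 'cV[R]_m).
Hypothesis g_diff : forall i x, differentiable (gcomp g i) x.
Variables (H Hh : 'M[R]_d).
Hypotheses (Hh_sym : Hh^T = Hh) (Hh_sqr : Hh *m Hh = H) (Hh_unit : Hh \in unitmx).

Lemma enorm_curvature_le (P : 'M[R]_m) (p v : 'cV[R]_d) (L : R) :
  0 <= L -> g p = 0 -> g (v + p) = 0 ->
  (forall t, 0 < t < 1 ->
     opnorm2 (P *m (Jac g (t *: v + p) - Jac g p) *m invmx Hh) <= L * mnorm H (t *: v)) ->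
  enorm (P *m (Jac g p *m v)) <= L / 2 * mnorm H v ^+ 2.
Proof.
move=> L_ge0 gp0 gq0 Jac_lip.
set z := P *m (Jac g p *m v); set K := mnorm H v.
have K_ge0 : 0 <= K by exact: sqrtr_ge0.
pose h t := dot (P^T *m z) (g (t *: v + p)).
pose dh t := dot (P^T *m z) (Jac g (t *: v + p) *m v).
have dhE t : dh t = dot z (P *m (Jac g (t *: v + p) *m v)) by rewrite /dh dot_trmulmx.
have dh0 : dh 0 = enorm z ^+ 2 by rewrite dhE scale0r add0r enorm_sqr.
have h0 : h 0 = 0 by rewrite /h scale0r add0r gp0 /dot mulmx0 mxE.
have h1 : h 1 = 0 by rewrite /h scale1r gq0 /dot mulmx0 mxE.
have dh_ge t : 0 < t < 1 -> dh 0 - enorm z * L * K ^+ 2 * t <= dh t.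
  move=> /andP [t_gt0 t_lt1].
  set At := P *m (Jac g (t *: v + p) - Jac g p) *m invmx Hh.
  have -> : dh t = dh 0 + dot z (At *m (Hh *m v)).
    rewrite !dhE scale0r add0r -dotDr /At -!mulmxA mulKmx // -mulmxDr mulmxBl.
    by rewrite subrKC.
  have At_le : opnorm2 At <= L * (t * K).
    have := Jac_lip t; rewrite t_gt0 t_lt1 (mnormZ Hh_sym Hh_sqr) ger0_norm ?(ltW t_gt0) //.
    by apply.
  have := enorm_mulmx_le At (Hh *m v); rewrite -(mnorm_sqrtmx Hh_sym Hh_sqr) -/K => Av_le.
  have := normr_dot_le z (At *m (Hh *m v)); rewrite ler_norml => /andP [dot_ge _].
  have := ler_wpM2r K_ge0 At_le => /(le_trans Av_le)/(ler_wpM2l (enorm_ge0 z)).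
  lra.
have := @deriv0_le_of_roots01 _ h dh _ (is_derive_dot_line g_diff _ p v) h0 h1 dh_ge.
rewrite dh0 => z_le.
have : 0 <= L / 2 * K ^+ 2 by rewrite mulr_ge0 ?divr_ge0 ?sqr_ge0.
nra.
Qed.

End Curvature.

Lemma kkt_gap_split (R : comRingType) m d (J J1 : 'M[R]_(m, d)) (H : 'M[R]_d)
    (ls l : 'cV[R]_m) (v : 'cV[R]_d) :
  (J1 - J)^T *m ls - H *m v + (J1 - J)^T *m (l - ls)
  = J1^T *m l - J^T *m ls - (H *m v + J^T *m (l - ls)).
Proof.
rewrite !linearB /= !mulmxBl.
set a := J1^T *m l; set b := J1^T *m ls; set c := J^T *m l; set e := J^T *m ls.
by apply/matrixP => i j; rewrite !mxE; ring.
Qed.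

Theorem lemma5 (R : realType) (m d : nat) (hmd : (m <= d)%N)
  (g : 'cV[R]_d -> 'cV[R]_m)
  (hconv : forall i : 'I_m, strongly_convex (gcomp g i))
  (hdiff : forall i : 'I_m, twice_differentiable (gcomp g i))
  (wstar w phistar phi : 'cV[R]_d)
  (hphistar : is_argmax [set x | forall i : 'I_m, g x i 0 <= 0] wstar phistar)
  (hphi : is_argmax [set x | forall i : 'I_m, g x i 0 <= 0] w phi)
  (hgphistar : g phistar = 0) (hgphi : g phi = 0)
  (lamstar lam : 'cV[R]_m)
  (hlamstar : forall i : 'I_m, 0 <= lamstar i 0)
  (hlam : forall i : 'I_m, 0 <= lam i 0)
  (hKKTstar : wstar = (Jac g phistar)^T *m lamstar)
  (hKKT : w = (Jac g phi)^T *m lam)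
  (H : 'M[R]_d)
  (hH : H = \sum_(i < m) lamstar i 0 *: hess (gcomp g i) phistar)
  (hHpd : posdef H)
  (W : 'M[R]_m)
  (hW : W = Jac g phistar *m invmx H *m (Jac g phistar)^T)
  (hWinv : W \in unitmx)
  (Hhalf : 'M[R]_d) (* H^{1/2} *)
  (hHhalf : symmx Hhalf /\ posdef Hhalf /\ Hhalf *m Hhalf = H)
  (Whalf : 'M[R]_m) (* W^{1/2} *)
  (hWhalf : symmx Whalf /\ posdef Whalf /\ Whalf *m Whalf = W)
  (PG : 'M[R]_d)
  (hPG : PG = invmx Hhalf *m (Jac g phistar)^T *m invmx W *m Jac g phistar
                *m invmx Hhalf)
  (L : R) (hL : 0 < L)
  (S1 : mnorm (invmx H) ((Jac g phi - Jac g phistar)^T *m lamstar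
                          - H *m (phi - phistar))
        <= 4^-1 * mnorm H (phi - phistar))
  (S2 : forall x : 'cV[R]_d,
        opnorm2 (invmx Whalf *m (Jac g x - Jac g phistar) *m invmx Hhalf)
        <= L * mnorm H (x - phistar)) :
  exists Delta : 'cV[R]_d,
    w - wstar = H *m (phi - phistar) + (Jac g phistar)^T *m (lam - lamstar) + Delta
    /\ mnorm (invmx H) Delta
       <= 4^-1 * mnorm H (phi - phistar)
          + L * mnorm H (phi - phistar) * mnorm W (lam - lamstar)
    /\ enorm (PG *m Hhalf *m (phi - phistar))
       <= L / 2 * mnorm H (phi - phistar) ^+ 2.
Proof.
have g_diff i x : differentiable (gcomp g i) x by exact: (hdiff i).1.
case: hHhalf => Hh_sym [/posdef_unitmx Hh_unit Hh_sqr].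
case: hWhalf => Wh_sym [/posdef_unitmx Wh_unit Wh_sqr].
have iHh_sym := trmx_invmx_sqrt Hh_sym.
have iHh_sqr := invmx_sqrtmx Hh_sqr Hh_unit.
exists (((Jac g phi - Jac g phistar)^T *m lamstar - H *m (phi - phistar))
        + (Jac g phi - Jac g phistar)^T *m (lam - lamstar)).
split; first by subst w wstar; rewrite kkt_gap_split subrKC.
split.
  apply: le_trans (mnormD_le iHh_sym iHh_sqr _ _) _; apply: lerD S1 _.
  apply: le_trans (mnorm_invmx_trmulmx_le Hh_sym Hh_sqr Hh_unit Wh_sym Wh_sqr Wh_unit _ _) _.
  by rewrite ler_wpM2r ?S2 //; exact: sqrtr_ge0.
rewrite hPG (enorm_projection Hh_sym Hh_sqr Hh_unit Wh_sym Wh_sqr Wh_unit _ hW).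
apply: (enorm_curvature_le g_diff Hh_sym Hh_sqr Hh_unit) => //; first exact: ltW.
  by rewrite subrK.
by move=> t _; have := S2 (t *: (phi - phistar) + phistar); rewrite addrK.
Qed.
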